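(* In the setting described in the context, for every partial construction map $\zeta'$, $$E'(\zeta')=\sum_{k\in U}w_k\Big(1-\prod_{j\in T_k}\big(1-P^{\zeta'(j)}_{i_kj}\big)\Big).$$
   Context: An SPSC instance: finite sets $S$ (services), $V$ (nodes), $U$ (users); sizes $s_i>0$; capacities $c_j>0$; for each user $k$ a service $i_k\in S$, a set $T_k\subseteq V$, a reward $w_k>0$. Let $\{x_{ij}\},\{y_k\}$ be an optimal solution of the LP with nonnegative variables: maximize $\sum_ky_kw_k$ s.t. $y_k\le\sum_{j\in T_k}x_{i_kj}$, $y_k\le1$; $\sum_ix_{ij}s_i\le c_j$; $x_{ij}=0$ if $s_i>c_j$; $0\le x_{ij}\le1$. Let $\beta:=1/4,\gamma:=1/2,\delta:=1/4$, $\mathbb N=\{1,2,\dots\}$. For $j\in V$: $P_j^\oplus:=\{i:c_j/2<s_i\le c_j\}$, $P_j^\ominus:=\{i:c_j/4<s_i\le c_j/2\}$, $P_j^q:=\{i:\gamma^qc_j\beta<s_i\le\gamma^{q-1}c_j\beta\}$ ($q\in\mathbb N$); $d_j^q:=\sum_{i\in P_j^q}x_{ij}$ for $q\in\mathbb N\cup\{\oplus,\ominus\}$; $v_j:=\delta c_j/\sum_{i:s_i\le c_j\beta}s_ix_{ij}$; $n_j^q:=\lceil v_jd_j^q\rceil$; $h_j:=d_j^\ominus$ if $d_j^\ominus<2$, else $d_j^\ominus/2$. A construction map $\zeta:V\to\{1,2,3\}$ has slot set $\Lambda(\zeta)$ (slot $\sigma$ has node $\nu(\sigma)$, class $\kappa(\sigma)$):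 for each $j$, one slot of class $\oplus$ if $\zeta(j)=1$; two slots of class $\ominus$ if $\zeta(j)=2$; for each $q\in\mathbb N$, $n_j^q$ slots of class $q$ if $\zeta(j)=3$; no other slots on $j$. A slot allocation of $\Lambda$ is $\tau:\Lambda\to S$ with $\tau(\sigma)\in P^{\kappa(\sigma)}_{\nu(\sigma)}$; $X^\tau_i:=\{j:\exists\sigma,\nu(\sigma)=j,\tau(\sigma)=i\}$; $f_\tau(k):=\mathbf 1[T_k\cap X^\tau_{i_k}\ne\emptyset]$. Random experiment: $\zeta(j)$ independent over $j$, equal to $1,2,3$ with probabilities $\delta d_j^\oplus,\ \delta h_j,\ 1-\delta d_j^\oplus-\delta h_j$; given $\zeta$, each slot $\sigma\in\Lambda(\zeta)$ independently gets $\tau(\sigma)=i$ with probability $x_{i\nu(\sigma)}/d^{\kappa(\sigma)}_{\nu(\sigma)}$, $i\in P^{\kappa(\sigma)}_{\nu(\sigma)}$. A partial construction map is $\zeta':V\to\{1,2,3,\emptyset\}$; $M(\zeta')$ is the set of construction maps agreeing with $\zeta'$ wherever $\zeta'(j)\ne\emptyset$; $E'(\zeta'):=\mathbb E[\sum_kf_\tau(k)w_k\mid\zeta\in M(\zeta')]$. For $i\in S$, $j\in V$ define $P^a_{ij}$, $a\in\{1,2,3\}$: if $s_i>c_j$, all are $0$; if $i\in P_j^\oplus$, $P^1_{ij}:=x_{ij}/d_j^\oplus$ and $P^2_{ij}=P^3_{ij}:=0$; if $i\in P_j^\ominus$, $P^2_{ij}:=1-(1-x_{ij}/d_j^\ominus)^2$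 and $P^1_{ij}=P^3_{ij}:=0$; if $i\in P_j^q$ for some $q\in\mathbb N$, $P^3_{ij}:=1-(1-x_{ij}/d_j^q)^{n_j^q}$ and $P^1_{ij}=P^2_{ij}:=0$. Further $P^\emptyset_{ij}:=\delta d_j^\oplus P^1_{ij}+\delta h_jP^2_{ij}+(1-\delta d_j^\oplus-\delta h_j)P^3_{ij}$. *)

From mathcomp Require Import all_boot all_order all_algebra.
Set Implicit Arguments.
Unset Strict Implicit.
Unset Printing Implicit Defensive.
Import Order.TTheory GRing.Theory Num.Theory.
Local Open Scope ring_scope.

(* Slot classes: oplus, ominus, and q (q >= 1). *)
Inductive cls := Cplus | Cminus | Cq of nat.

(* Values of a construction map: the ordinal 0, 1, 2 : 'I_3 encode the
   values 1, 2, 3 of the paper.  A partial construction map takes values in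
   option 'I_3, with None encoding the empty value. *)

Section SPSC.
Variable R : archiRealFieldType.
Variables S V U : finType.
Variable s : S -> R.
Variable c : V -> R.
Variable iu : U -> S.           (* service of user k *)
Variable T : U -> {set V}.
Variable w : U -> R.

Definition lp_feasible (x : S -> V -> R) (y : U -> R) : Prop :=
  (forall k, 0 <= y k) /\
  (forall k, y k <= \sum_(j in T k) x (iu k) j) /\
  (forall k, y k <= 1) /\
  (forall j, \sum_i x i j * s i <= c j) /\
  (forall i j, c j < s i -> x i j = 0) /\
  (forall i j, 0 <= x i j /\ x i j <= 1).

Definition lp_obj (y : U -> R) : R := \sum_k y k * w k.

Definition lp_optimal (x : S -> V -> R) (y : U -> R) : Prop :=
  lp_feasible x y /\
  forall x' y', lp_feasible x' y' -> lp_obj y' <= lp_obj y.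

Variable x : S -> V -> R.

Definition beta : R := 1 / 4.
Definition gamma : R := 1 / 2.
Definition delta : R := 1 / 4.

Definition inP (j : V) (k : cls) (i : S) : bool :=
  match k with
  | Cplus => (c j / 2 < s i) && (s i <= c j)
  | Cminus => (c j / 4 < s i) && (s i <= c j / 2)
  | Cq q => (gamma ^+ q * c j * beta < s i) && (s i <= gamma ^+ q.-1 * c j * beta)
  end.

Definition d (j : V) (k : cls) : R := \sum_(i | inP j k i) x i j.

Definition v (j : V) : R :=
  delta * c j / \sum_(i | s i <= c j * beta) s i * x i j.

Definition n (j : V) (q : nat) : nat := `|Num.ceil (v j * d j (Cq q))|%N.

Definition h (j : V) : R :=
  if d j Cminus < 2 then d j Cminus else d j Cminus / 2.

(* Every q with P_j^q nonempty satisfies 1 <= q <= qbound j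
   (since 2^(q-1) <= c_j beta / s_i); hence n_j^q = 0 for q > qbound j. *)
Definition qbound (j : V) : nat :=
  \max_(i : S) (`|Num.floor (c j * beta / s i)|%N).+1.

Definition zprob (j : V) (a : 'I_3) : R :=
  match val a with
  | 0%N => delta * d j Cplus
  | 1%N => delta * h j
  | _ => 1 - delta * d j Cplus - delta * h j
  end.

Definition slots_at (j : V) (a : 'I_3) : seq cls :=
  match val a with
  | 0%N => [:: Cplus]
  | 1%N => [:: Cminus; Cminus]
  | _ => flatten [seq nseq (n j q) (Cq q) | q <- iota 1 (qbound j)]
  end.

Definition slots (z : {ffun V -> 'I_3}) : seq (V * cls) :=
  flatten [seq [seq (j, k) | k <- slots_at j (z j)] | j <- enum V].

Definition slot_prob (sl : V * cls) (i : S) : R :=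
  if inP sl.1 sl.2 i then x i sl.1 / d sl.1 sl.2 else 0.

(* j \in X^tau_i, for the allocation giving the slots L the services t *)
Definition covered (L : seq (V * cls)) (t : seq S) (i : S) (j : V) : bool :=
  has (fun p : (V * cls) * S => (p.1.1 == j) && (p.2 == i)) (zip L t).

Definition reward (L : seq (V * cls)) (t : seq S) : R :=
  \sum_k w k * (if [exists j in T k, covered L t (iu k) j] then 1 else 0).

(* E[ sum_k f_tau(k) w_k | zeta = z ] *)
Definition condE (z : {ffun V -> 'I_3}) : R :=
  \sum_(t : (size (slots z)).-tuple S)
     (\prod_(p <- zip (slots z) t) slot_prob p.1 p.2) * reward (slots z) t.

Definition zeta_prob (z : {ffun V -> 'I_3}) : R := \prod_j zprob j (z j).

Definition inM (z' : {ffun V -> option 'I_3}) (z : {ffun V -> 'I_3}) : bool :=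
  [forall j, if z' j is Some a then z j == a else true].

Definition PM (z' : {ffun V -> option 'I_3}) : R :=
  \sum_(z | inM z' z) zeta_prob z.

(* E'(zeta') = E[ sum_k f_tau(k) w_k | zeta \in M(zeta') ] *)
Definition Eprime (z' : {ffun V -> option 'I_3}) : R :=
  (\sum_(z | inM z' z) zeta_prob z * condE z) / PM z'.

Definition Pa (a : 'I_3) (i : S) (j : V) : R :=
  if c j < s i then 0 else
  match val a with
  | 0%N => if inP j Cplus i then x i j / d j Cplus else 0
  | 1%N => if inP j Cminus i then 1 - (1 - x i j / d j Cminus) ^+ 2 else 0
  | _ => if inP j Cplus i || inP j Cminus i then 0 else
         match [pick q : 'I_(qbound j).+1 | (0 < val q)%N && inP j (Cq q) i] with
         | Some q => 1 - (1 - x i j / d j (Cq q)) ^+ (n j q)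
         | None => 0
         end
  end.

Definition Pz (a : option 'I_3) (i : S) (j : V) : R :=
  match a with
  | Some a => Pa a i j
  | None => delta * d j Cplus * Pa (@Ordinal 3 0 isT) i j
            + delta * h j * Pa (@Ordinal 3 1 isT) i j
            + (1 - delta * d j Cplus - delta * h j) * Pa (@Ordinal 3 2 isT) i j
  end.

End SPSC.

From mathcomp Require Import all_boot all_order all_algebra.
From mathcomp Require Import ring lra.
Set Implicit Arguments.
Unset Strict Implicit.
Unset Printing Implicit Defensive.
Import Order.TTheory GRing.Theory Num.Theory.
Local Open Scope ring_scope.

(* Conditioned on [zeta], the slots receive their services independently, so
   user [k] is missed with probability [prod_l (1 - Pr[slot l gets i_k])],
   over the slots [l] on nodes of [T_k].  Grouped by node, these factors give
   [1 - P^{zeta(j)}_{i_k j}]: the classes [P_j^q] are disjoint, so when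
   [zeta(j) = 3] only the [n_j^q] slots of the class containing [i_k] matter.
   The coordinates of [zeta] are independent as well, so averaging over
   [M(zeta')] turns each node factor into its mean [1 - P^{zeta'(j)}_{i_k j}]. *)

Lemma all_flatten (X : Type) (a : pred X) (ss : seq (seq X)) :
  all a (flatten ss) = all (all a) ss.
Proof. by elim: ss => //= s ss IH; rewrite all_cat IH. Qed.

Lemma eq_big_all (R I : Type) (idx : R) (op : R -> R -> R) (P : pred I)
    (r : seq I) (F G : I -> R) :
  all P r -> (forall i, P i -> F i = G i) ->
  \big[op/idx]_(i <- r) F i = \big[op/idx]_(i <- r) G i.
Proof.
move=> Pr eqFG; elim: r Pr => [|i r IH] /=; first by rewrite !big_nil.
by case/andP=> Pi /IH eq_r; rewrite !big_cons eqFG // eq_r.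
Qed.

Lemma existsb_has (J : finType) (X : Type) (P : pred J) (q : J -> pred X)
    (r : seq X) :
  [exists (j | P j), has (q j) r] = has (fun a => [exists (j | P j), q j a]) r.
Proof.
elim: r => [|a r IH] /=; first by apply/existsP => -[j]; rewrite andbF.
rewrite -IH; apply/existsP/orP.
  move=> [j /andP[Pj /orP[qa | qr]]]; [left | right];
    by apply/existsP; exists j; rewrite Pj ?qa ?qr.
by move=> [|] /existsP[j /andP[Pj q_j]]; exists j; rewrite Pj q_j ?orbT.
Qed.

Section IndependentChoices.
Variables (R : comRingType) (I : Type) (A : finType).
Implicit Types (F : I -> A -> R) (L : seq I).

Lemma sum_tuple_prod_zip F L :
  \sum_(t : (size L).-tuple A) \prod_(p <- zip L t) F p.1 p.2 =
  \prod_(l <- L) \sum_a F l a.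
Proof.
elim: L => [|l L IH].
  rewrite big_nil (eq_bigr (fun=> 1)) => [|t _]; last by rewrite tuple0 big_nil.
  by rewrite sumr_const card_tuple expn0.
rewrite big_cons -IH mulr_suml; symmetry.
under eq_bigr do rewrite mulr_sumr.
rewrite pair_big /= (reindex (fun p : A * (size L).-tuple A => [tuple of p.1 :: p.2])) /=.
  by apply: eq_bigr => p _; rewrite big_cons.
exists (fun t : (size L).+1.-tuple A => (thead t, [tuple of behead t])).
  by move=> [a t] _ /=; congr pair; apply: val_inj.
by move=> t _ /=; rewrite [in RHS](tuple_eta t).
Qed.

Lemma indicator_has (X : Type) (q : pred X) (r : seq X) :
  (if has q r then 1 else 0 : R) = 1 - \prod_(p <- r) (1 - (if q p then 1 else 0)).
Proof.
elim: r => [|p r IH] /=; first by rewrite big_nil subrr.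
by rewrite big_cons; case: (q p) => /=; rewrite ?subrr ?mul0r ?subr0 ?mul1r.
Qed.

Lemma sum_tuple_prod_zip_has F (q : I -> A -> bool) L :
  all (fun l => \sum_a F l a == 1) L ->
  \sum_(t : (size L).-tuple A)
     (\prod_(p <- zip L t) F p.1 p.2) *
     (if has (fun p => q p.1 p.2) (zip L t) then 1 else 0)
  = 1 - \prod_(l <- L) (1 - \sum_(a | q l a) F l a).
Proof.
move=> F_normed.
transitivity (\sum_(t : (size L).-tuple A) \prod_(p <- zip L t) F p.1 p.2 -
  \sum_(t : (size L).-tuple A) \prod_(p <- zip L t)
     (fun l a => F l a * (1 - if q l a then 1 else 0)) p.1 p.2).
  rewrite -sumrB; apply: eq_bigr => t _.
  by rewrite indicator_has mulrBr mulr1 -big_split.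
rewrite sum_tuple_prod_zip (eq_big_all _ _ F_normed (G := fun=> 1)); last by move=> l /eqP.
rewrite big1 // (sum_tuple_prod_zip (fun l a => F l a * (1 - if q l a then 1 else 0))).
congr (_ - _); apply: (eq_big_all _ _ F_normed) => l /eqP F_l1.
under eq_bigr do rewrite mulrBr mulr1.
rewrite sumrB F_l1 [in RHS]big_mkcond; congr (_ - _); apply: eq_bigr => a _.
by case: ifP; rewrite ?mulr1 ?mulr0.
Qed.

End IndependentChoices.

Section SlotAllocation.
Variables (R : archiRealFieldType) (S V U : finType).
Variables (s : S -> R) (c : V -> R) (iu : U -> S) (T : U -> {set V}) (w : U -> R).
Variable x : S -> V -> R.
Hypothesis c_gt0 : forall j, 0 < c j.

Local Notation sp := (slot_prob s c x).
Local Arguments inP : simpl never.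

Lemma exists_covered (L : seq (V * cls)) (t : seq S) (B : {set V}) i :
  [exists j in B, covered L t i j] =
  has (fun p : (V * cls) * S => (p.1.1 \in B) && (p.2 == i)) (zip L t).
Proof.
rewrite /covered existsb_has; apply: eq_has => p /=.
apply/existsP/andP => [[j /and3P[jB /eqP-> ->]] | [pB pi]] //.
by exists p.1.1; rewrite pB eqxx.
Qed.

Lemma condE_slots z : all (fun l => \sum_a sp l a == 1) (slots s c x z) ->
  condE s c iu T w x z = \sum_k w k *
    (1 - \prod_(l <- slots s c x z) (1 - \sum_(a | (l.1 \in T k) && (a == iu k)) sp l a)).
Proof.
move=> normed; rewrite /condE /reward.
under eq_bigr do rewrite mulr_sumr.
rewrite exchange_big; apply: eq_bigr => k _.
rewrite -(sum_tuple_prod_zip_has (fun l a => (l.1 \in T k) && (a == iu k)) normed) mulr_sumr.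
by apply: eq_bigr => t _; rewrite exists_covered mulrCA.
Qed.

Lemma prod_slots_by_node z i (B : {set V}) :
  \prod_(l <- slots s c x z) (1 - \sum_(a | (l.1 \in B) && (a == i)) sp l a) =
  \prod_(j in B) \prod_(k <- slots_at s c x j (z j)) (1 - sp (j, k) i).
Proof.
rewrite /slots big_flatten big_map big_enum /= [RHS]big_mkcond /=.
apply: eq_bigr => j _; rewrite big_map; case: (j \in B).
  by apply: eq_bigr => k _; rewrite big_pred1_eq.
by rewrite big1 // => k _; rewrite big_pred0_eq subr0.
Qed.

Lemma inP_Cq_le j q i : inP s c j (Cq q) i -> s i <= c j / 4.
Proof.
rewrite /inP /beta /gamma => /andP[_ le_si].
have : (1 / 2) ^+ q.-1 <= 1 :> R by apply: exprn_ile1; lra.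
have := c_gt0 j; have : 0 <= (1 / 2) ^+ q.-1 :> R by apply: exprn_ge0; lra.
nra.
Qed.

Lemma inP_Cq_disjoint j q q' i :
  (q < q')%N -> inP s c j (Cq q) i -> ~~ inP s c j (Cq q') i.
Proof.
rewrite /inP /beta /gamma => lt_qq' /andP[lt_si _]; apply/negP => /andP[_ le_si].
have : (1 / 2) ^+ q'.-1 <= (1 / 2) ^+ q :> R.
  by apply: ler_wiXn2l; [lra | lra | rewrite -ltnS prednK // (leq_ltn_trans _ lt_qq')].
have := c_gt0 j; nra.
Qed.

Lemma inP_Cq_uniq j q q' i : inP s c j (Cq q) i -> inP s c j (Cq q') i -> q = q'.
Proof.
move=> iPq iPq'; case: (ltngtP q q') => // lt_q.
  by case/negP: (inP_Cq_disjoint lt_q iPq).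
by case/negP: (inP_Cq_disjoint lt_q iPq').
Qed.

Lemma prod_Cq_slots j i :
  \prod_(q <- iota 1 (qbound s c j)) (1 - sp (j, Cq q) i) ^+ n s c x j q =
  1 - Pa s c x (@Ordinal 3 2 isT) i j.
Proof.
rewrite /Pa /=; case: pickP => [q /andP[q_gt0 iPq] | no_q].
- have le_si := inP_Cq_le iPq; have c_gt0j := c_gt0 j.
  have -> : (c j < s i) = false by apply/negbTE; rewrite -leNgt; lra.
  have -> : inP s c j Cplus i = false.
    by rewrite /inP; apply/negbTE/nandP; left; rewrite -leNgt; lra.
  have -> : inP s c j Cminus i = false.
    by rewrite /inP; apply/negbTE/nandP; left; rewrite -leNgt.
  rewrite (bigD1_seq (val q)) ?iota_uniq ?mem_iota ?q_gt0 ?add1n ?ltn_ord //=.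
  rewrite big1 ?mulr1; first by rewrite /slot_prob /= iPq; ring.
  move=> q' ne_q'q; rewrite /slot_prob /=.
  case: ifP => [iPq'|_]; last by rewrite subr0 expr1n.
  by rewrite (inP_Cq_uniq iPq' iPq) eqxx in ne_q'q.
- rewrite big_seq big1 => [|q]; first by case: ifP => _; last case: ifP => _; rewrite subr0.
  rewrite mem_iota add1n => /andP[q_gt0 lt_q]; rewrite /slot_prob /=.
  case: ifP => [iPq|_]; last by rewrite subr0 expr1n.
  by have := no_q (Ordinal lt_q); rewrite /= q_gt0 iPq.
Qed.

Lemma prod_slots_at j (b : 'I_3) i :
  \prod_(k <- slots_at s c x j b) (1 - sp (j, k) i) = 1 - Pa s c x b i j.
Proof.
have c_gt0j := c_gt0 j.
case: b => [[|[|[|b]]] lt_b3] //; rewrite /slots_at /Pa /=.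
- rewrite big_seq1 /slot_prob /=; case: ifP => [/andP[_ le_si] | _].
    by rewrite ltNge le_si.
  by case: ifP; rewrite subr0.
- rewrite big_cons big_seq1 /slot_prob /=; case: ifP => [/andP[_ le_si] | _].
    by rewrite ltNge (_ : s i <= c j) /=; [ring | lra].
  by rewrite subr0 mulr1; case: ifP; rewrite subr0.
- rewrite big_flatten big_map; under eq_bigr do rewrite big_nseq iter_mulr_1.
  exact: prod_Cq_slots.
Qed.

Lemma sum_slot_prob j k : d s c x j k != 0 -> \sum_a sp (j, k) a = 1.
Proof. by move=> d_neq0; rewrite /slot_prob /= -big_mkcond -mulr_suml divff. Qed.

(* Slots of class [k] on [j] exist only if [d_j^k > 0]: the values 1 and 2 of
   [zeta(j)] have probabilities [delta d_j^+] and [delta h_j], and [n_j^q = 0]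
   when [d_j^q = 0]. *)
Lemma slots_normalized z : zeta_prob s c x z != 0 ->
  all (fun l => \sum_a sp l a == 1) (slots s c x z).
Proof.
move=> z_neq0; rewrite /slots all_flatten all_map; apply/allP => j _ /=.
have : zprob s c x j (z j) != 0.
  by apply: contra z_neq0 => zj_eq0; apply/prodf_eq0; exists j.
rewrite all_map; case: (z j) => [[|[|[|b]]] lt_b3] //;
  rewrite /zprob /slots_at /= => zj_neq0.
- rewrite andbT sum_slot_prob //.
  by apply: contraNneq zj_neq0 => ->; rewrite mulr0.
- rewrite andbT andbb sum_slot_prob //.
  by apply: contraNneq zj_neq0; rewrite /h => ->; case: ifP; rewrite ?mul0r mulr0.
- rewrite all_flatten all_map; apply/allP => q _ /=; rewrite all_nseq -implyNb /=.
  apply/implyP => n_neq0; rewrite sum_slot_prob //; apply: contra n_neq0 => /eqP d_eq0.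
  by rewrite /n d_eq0 mulr0 ceil0.
Qed.

Lemma condE_Pa z : zeta_prob s c x z != 0 ->
  condE s c iu T w x z =
  \sum_k w k * (1 - \prod_(j in T k) (1 - Pa s c x (z j) (iu k) j)).
Proof.
move=> z_neq0; rewrite condE_slots ?slots_normalized //; apply: eq_bigr => k _.
by rewrite prod_slots_by_node; under eq_bigr do rewrite prod_slots_at.
Qed.

Definition agrees (o : option 'I_3) (a : 'I_3) : bool :=
  if o is Some b then a == b else true.

Lemma sum_inM_prod z' (G : V -> 'I_3 -> R) :
  \sum_(z | inM z' z) \prod_j G j (z j) = \prod_j \sum_(a | agrees (z' j) a) G j a.
Proof.
rewrite bigA_distr_big_dep; apply: eq_bigl => z.
by apply/forallP/familyP => agree_z j; have := agree_z j; rewrite /agrees; case: (z' j).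
Qed.

Lemma sum_zprob_Pa_agrees j o i :
  \sum_(a | agrees o a) zprob s c x j a * (1 - Pa s c x a i j) =
  (\sum_(a | agrees o a) zprob s c x j a) * (1 - Pz s c x o i j).
Proof.
case: o => [b|]; first by rewrite !big_pred1_eq.
by rewrite !big_ord_recl !big_ord0 /zprob /Pz /Pa /=; ring.
Qed.

Lemma sum_inM_zeta_prob_prod z' i (B : {set V}) :
  \sum_(z | inM z' z) zeta_prob s c x z * \prod_(j in B) (1 - Pa s c x (z j) i j) =
  PM s c x z' * \prod_(j in B) (1 - Pz s c x (z' j) i j).
Proof.
have split_node z : zeta_prob s c x z * \prod_(j in B) (1 - Pa s c x (z j) i j) =
    \prod_j (zprob s c x j (z j) * (if j \in B then 1 - Pa s c x (z j) i j else 1)).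
  by rewrite /zeta_prob big_split /= -big_mkcond.
rewrite (eq_bigr _ (fun z _ => split_node z)).
rewrite (sum_inM_prod z'
  (fun j a => zprob s c x j a * (if j \in B then 1 - Pa s c x a i j else 1))).
rewrite /PM /zeta_prob sum_inM_prod.
rewrite [X in _ * X]big_mkcond -big_split /=; apply: eq_bigr => j _.
case: (j \in B); first exact: sum_zprob_Pa_agrees.
by rewrite mulr1; apply: eq_bigr => a _; rewrite mulr1.
Qed.

Lemma sum_inM_zeta_condE z' :
  \sum_(z | inM z' z) zeta_prob s c x z * condE s c iu T w x z =
  PM s c x z' *
  \sum_k w k * (1 - \prod_(j in T k) (1 - Pz s c x (z' j) (iu k) j)).
Proof.
transitivity (\sum_(z | inM z' z) zeta_prob s c x z *
    \sum_k w k * (1 - \prod_(j in T k) (1 - Pa s c x (z j) (iu k) j))).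
  apply: eq_bigr => z _; have [->|z_neq0] := eqVneq (zeta_prob s c x z) 0.
    by rewrite !mul0r.
  by rewrite condE_Pa.
under eq_bigr do rewrite mulr_sumr.
rewrite exchange_big mulr_sumr; apply: eq_bigr => k _.
under eq_bigr do rewrite mulrCA mulrBr mulr1.
by rewrite -mulr_sumr sumrB sum_inM_zeta_prob_prod -/(PM s c x z'); ring.
Qed.

End SlotAllocation.

Theorem theorem14 (R : archiRealFieldType) (S V U : finType)
    (s : S -> R) (c : V -> R) (iu : U -> S) (T : U -> {set V}) (w : U -> R)
    (x : S -> V -> R) (y : U -> R)
    (hs : forall i, 0 < s i) (hc : forall j, 0 < c j) (hw : forall k, 0 < w k)
    (hopt : lp_optimal s c iu T w x y)
    (z' : {ffun V -> option 'I_3})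
    (hpos : 0 < PM s c x z') :
  Eprime s c iu T w x z' =
  \sum_(k : U) w k *
     (1 - \prod_(j in T k) (1 - Pz s c x (z' j) (iu k) j)).
Proof. by rewrite /Eprime sum_inM_zeta_condE // mulrC mulKf // lt0r_neq0. Qed.
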